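(* Let $\mathcal{X}$ be a finite-dimensional real Hilbert space with norm $\|\cdot\|$. Let $\mathbb{P}_{\mathrm{true}}$ be a probability distribution on $\mathcal{X}$ whose support $\mathcal{M}=\mathrm{supp}(\mathbb{P}_{\mathrm{true}})$ is a convex, compact set. Let $\{\mathbb{P}^k\}_{k\in\mathbb{N}}$ be probability distributions on $\mathcal{X}$ such that, for all $k\in\mathbb{N}$, $(P_{\mathcal{M}})_\#\mathbb{P}^k=\mathbb{P}_{\mathrm{true}}$ (up to a set of measure zero). Let $\Gamma$ be the set of nonnegative $1$-Lipschitz functions $f:\mathcal{X}\to\mathbb{R}$. Then for all $k\in\mathbb{N}$, $\tau\in[0,\infty)$ and $p\in[1,\infty)$, the distance function $d_{\mathcal{M}}$ is a solution to $$\min_{f\in\Gamma}\; \mathbb{E}_{u\sim\mathbb{P}_{\mathrm{true}}}\big[f(u)+\tau f(u)^p\big]-\mathbb{E}_{u^k\sim\mathbb{P}^k}\big[f(u^k)\big].$$ Moreover, when $\tau>0$, the restriction of each minimizer $f^\star$ of this problem to the support of $\mathbb{P}^k$ is unique, i.e. $f^\star(u^k)=d_{\mathcal{M}}(u^k)$ for all $u^k\in\mathrm{supp}(\mathbb{P}^k)$.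
   Context: For a convex compact set $\mathcal{M}\subset\mathcal{X}$, $P_{\mathcal{M}}(u)=\arg\min_{v\in\mathcal{M}}\|v-u\|$ is the metric projection and $d_{\mathcal{M}}(u)=\inf_{v\in\mathcal{M}}\|v-u\|=\|P_{\mathcal{M}}(u)-u\|$ is the pointwise distance function. For a map $T$ and a probability measure $\mathbb{Q}$, $T_\#\mathbb{Q}$ denotes the push-forward measure, $T_\#\mathbb{Q}[U]=\mathbb{Q}[T^{-1}(U)]$. *)

From HB Require Import structures.
From mathcomp Require Import all_boot all_order all_algebra.
From mathcomp Require Import all_classical all_reals all_analysis.
Set Implicit Arguments. Unset Strict Implicit. Unset Printing Implicit Defensive.
Import Order.TTheory GRing.Theory Num.Theory.
Import numFieldNormedType.Exports.
Local Open Scope classical_set_scope.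
Local Open Scope ring_scope.

(* The finite-dimensional real Hilbert space X is modelled as R^n = 'rV[R]_n
   with the Euclidean norm (every n-dim real Hilbert space is isometric to it). *)
Definition enorm (R : realType) (n : nat) (x : 'rV[R]_n) : R :=
  Num.sqrt (\sum_(i < n) x 0 i ^+ 2).

Definition borelX (R : realType) (n : nat) :=
  g_sigma_algebraType (@open 'rV[R]_n).

(* Support of a measure: points all of whose open neighbourhoods have
   positive measure (= smallest closed set of full measure). *)
Definition supp (R : realType) (n : nat) (P : set (borelX R n) -> \bar R)
  : set 'rV[R]_n :=
  [set x | forall U : set 'rV[R]_n, open U -> U x -> (0 < P U)%E].

Definition projM (R : realType) (n : nat) (M : set 'rV[R]_n) (u : 'rV[R]_n)
  : 'rV[R]_n :=
  xget 0 [set v | M v /\ forall w, M w -> enorm (v - u) <= enorm (w - u)].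

Definition distM (R : realType) (n : nat) (M : set 'rV[R]_n) (u : 'rV[R]_n) : R :=
  inf [set enorm (v - u) | v in M].

Definition Gamma (R : realType) (n : nat) (f : 'rV[R]_n -> R) : Prop :=
  (forall x, 0 <= f x) /\ (forall x y, `|f x - f y| <= enorm (x - y)).

Definition objective (R : realType) (n : nat)
  (Ptrue Pk : {measure set (borelX R n) -> \bar R}) (tau p : R)
  (f : 'rV[R]_n -> R) : \bar R :=
  (\int[Ptrue]_x (f x + tau * f x `^ p)%:E - \int[Pk]_x (f x)%:E)%E.

(* Push-forward invariance turns E_P[g] into E_Q[g o projM] for g >= 0, where
   P = Ptrue, Q = P^k and projM is the metric projection onto M = supp P; it is
   nonexpansive because M is convex, hence continuous and measurable.  A
   1-Lipschitz f satisfies f u <= f (projM u) + d_M u, so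
   E_Q[f] <= E_P[f] + E_Q[d_M] and the objective of f is at least
   E_P[tau f^p] - E_Q[d_M] >= - E_Q[d_M], which is the objective of d_M since
   d_M vanishes on M.  For a minimizer f* with tau > 0 and E_Q[d_M] finite all
   these inequalities are equalities: E_P[tau f*^p] = 0 makes f* vanish on
   supp P, hence f* <= d_M, and then E_Q[d_M - f*] = 0 makes f* = d_M on
   supp Q.  Both steps use that a nonnegative function with zero integral
   cannot be positive on an open set meeting the support. *)

From HB Require Import structures.
From mathcomp Require Import all_boot all_order all_algebra.
From mathcomp Require Import all_classical all_reals all_analysis.
From mathcomp Require Import ring lra measurable_realfun.
Set Implicit Arguments. Unset Strict Implicit. Unset Printing Implicit Defensive.
Import Order.TTheory GRing.Theory Num.Theory.
Import numFieldNormedType.Exports.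
Local Open Scope classical_set_scope.
Local Open Scope ring_scope.

Section Euclidean.
Variables (R : realType) (n : nat).
Implicit Types (x y z : 'rV[R]_n).

Definition dot x y : R := \sum_(i < n) x 0 i * y 0 i.

Lemma dotC x y : dot x y = dot y x.
Proof. by apply: eq_bigr => i _; rewrite mulrC. Qed.

Lemma dotDl x y z : dot (x + y) z = dot x z + dot y z.
Proof. by rewrite /dot -big_split; apply: eq_bigr => i _; rewrite !mxE mulrDl. Qed.

Lemma dotZl (a : R) x y : dot (a *: x) y = a * dot x y.
Proof. by rewrite /dot mulr_sumr; apply: eq_bigr => i _; rewrite !mxE mulrA. Qed.

Lemma dotNl x y : dot (- x) y = - dot x y.
Proof. by rewrite -scaleN1r dotZl mulN1r. Qed.

Lemma dotBl x y z : dot (x - y) z = dot x z - dot y z.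
Proof. by rewrite dotDl dotNl. Qed.

Lemma dotDr x y z : dot x (y + z) = dot x y + dot x z.
Proof. by rewrite dotC dotDl !(dotC x). Qed.

Lemma dotZr (a : R) x y : dot x (a *: y) = a * dot x y.
Proof. by rewrite dotC dotZl dotC. Qed.

Lemma dotNr x y : dot x (- y) = - dot x y.
Proof. by rewrite dotC dotNl dotC. Qed.

Lemma dotBr x y z : dot x (y - z) = dot x y - dot x z.
Proof. by rewrite dotC dotBl !(dotC x). Qed.

Lemma dot0l y : dot 0 y = 0.
Proof. by rewrite -(scale0r 0) dotZl mul0r. Qed.

Lemma enorm_sqr x : enorm x ^+ 2 = dot x x.
Proof.
rewrite /enorm sqr_sqrtr; last by apply: sumr_ge0 => i _; rewrite sqr_ge0.
by apply: eq_bigr => i _; rewrite expr2.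
Qed.

Lemma enorm_ge0 x : 0 <= enorm x.
Proof. exact: sqrtr_ge0. Qed.

Lemma enorm_eq0 x : (enorm x == 0) = (x == 0).
Proof.
apply/idP/eqP => [|->]; last first.
  by rewrite /enorm big1 ?sqrtr0 // => i _; rewrite mxE expr0n.
rewrite sqrtr_eq0 le_eqVlt ltNge sumr_ge0 ?orbF => [/eqP x0|i _]; last exact: sqr_ge0.
apply/rowP => i; rewrite mxE; apply/eqP; rewrite -sqrf_eq0; apply/eqP.
by move: x0 => /psumr_eq0P; apply => // j _; rewrite sqr_ge0.
Qed.

Lemma enorm0 : enorm (0 : 'rV[R]_n) = 0.
Proof. by apply/eqP; rewrite enorm_eq0. Qed.

Lemma dot_le_enorm x y : dot x y <= enorm x * enorm y.
Proof.
have [->|x0] := eqVneq x 0; first by rewrite dot0l enorm0 mul0r.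
have [->|y0] := eqVneq y 0; first by rewrite dotC dot0l enorm0 mulr0.
have xy_gt0 : 0 < enorm x * enorm y.
  by rewrite mulr_gt0 // lt0r enorm_ge0 enorm_eq0 ?x0 ?y0.
(* 0 <= |q x - p y|^2 = 2 p q (p q - x.y) with p = |x| and q = |y| *)
have := enorm_sqr (enorm y *: x - enorm x *: y).
rewrite !(dotBl, dotBr, dotZl, dotZr) -!enorm_sqr (dotC y x).
have := sqr_ge0 (enorm (enorm y *: x - enorm x *: y)); nra.
Qed.

Lemma enormD x y : enorm (x + y) <= enorm x + enorm y.
Proof.
rewrite -ler_sqr ?nnegrE ?addr_ge0 ?enorm_ge0 //.
rewrite enorm_sqr !(dotDl, dotDr) (dotC y x) sqrrD -!enorm_sqr.
have := dot_le_enorm x y; lra.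
Qed.

Lemma enormN x : enorm (- x) = enorm x.
Proof. by rewrite /enorm; congr Num.sqrt; apply: eq_bigr => i _; rewrite mxE sqrrN. Qed.

Lemma enorm_distC x y : enorm (x - y) = enorm (y - x).
Proof. by rewrite -enormN opprB. Qed.

Lemma ler_dist_enorm x y : `|enorm x - enorm y| <= enorm (x - y).
Proof.
have := enormD (x - y) y; have := enormD (y - x) x.
by rewrite !subrK enorm_distC ler_norml; lra.
Qed.

Lemma mx_norm_le_enorm x : `|x| <= enorm x.
Proof.
rewrite [`|x|]mx_normrE; apply: bigmax_le => [|[i j] _ /=]; first exact: enorm_ge0.
rewrite -ler_sqr ?nnegrE ?enorm_ge0 // enorm_sqr real_normK ?num_real //.
rewrite /dot (ord1 i) (bigD1 j) //= -expr2 lerDl.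
by apply: sumr_ge0 => k _; rewrite -expr2 sqr_ge0.
Qed.

Lemma enorm_le_mx_norm x : enorm x <= n%:R * `|x|.
Proof.
rewrite -ler_sqr ?nnegrE ?enorm_ge0 ?mulr_ge0 //.
have x_le i : x 0 i * x 0 i <= `|x| ^+ 2.
  rewrite -expr2 -real_normK ?num_real // lerXn2r ?nnegrE // [`|x|]mx_normrE.
  exact: (le_bigmax _ (fun ij => `|x ij.1 ij.2|) (0, i)).
rewrite enorm_sqr (le_trans (ler_sum _ (fun i _ => x_le i))) //.
rewrite sumr_const card_ord exprMn -mulr_natl.
have n_le : (n%:R : R) <= n%:R ^+ 2.
  by case: n {x x_le} => [|m]; rewrite ?expr2 ?mul0r // ler_peMr ?ler1n.
by have := sqr_ge0 `|x|; nra.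
Qed.

Lemma enorm_lipschitz_continuous (V : normedModType R) (g : 'rV[R]_n -> V) :
  (forall x y, `|g x - g y| <= enorm (x - y)) -> continuous g.
Proof.
move=> g_lip x; apply/(@cvgrPdist_lt _ _ _ (nbhs x) (nbhs_filter x)) => e e_gt0.
have d_gt0 : 0 < e / n.+1%:R by rewrite divr_gt0.
near=> y.
have xy_lt : `|x - y| < e / n.+1%:R.
  by near: y; have := @near_ball _ 'rV[R]_n x _ d_gt0; rewrite -ball_normE.
rewrite (le_lt_trans (g_lip x y)) // (le_lt_trans (enorm_le_mx_norm _)) //.
rewrite (@le_lt_trans _ _ (n.+1%:R * `|x - y|)) ?ler_wpM2r ?ler_nat //.
by rewrite mulrC -ltr_pdivlMr.
Unshelve. all: by end_near.
Qed.

Lemma continuous_enorm : continuous (@enorm R n).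
Proof. by apply: enorm_lipschitz_continuous => x y; exact: ler_dist_enorm. Qed.

Lemma Gamma_continuous (f : 'rV[R]_n -> R) : Gamma f -> continuous f.
Proof. by move=> [_]; exact: enorm_lipschitz_continuous. Qed.

End Euclidean.

Lemma probability_integral_cst_lty d (T : measurableType d) (R : realType)
    (mu : probability T R) (c : R) :
  0 <= c -> (\int[mu]_x c%:E < +oo)%E.
Proof.
move=> c_ge0; rewrite integral_cst // lte_mul_pinfty ?lee_fin //.
exact: le_lt_trans (probability_le1 mu measurableT) (ltry 1).
Qed.

Section Borel.
Variables (R : realType) (n : nat).

Lemma continuous_measurable_fun_rV (f : 'rV[R]_n -> R) :
  continuous f -> measurable_fun [set: borelX R n] (f : borelX R n -> R).
Proof.
move=> f_cont; apply: (@measurability _ _ _ _ _ _ (@RGenOpens.G R)).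
  exact: RGenOpens.measurableE.
move=> _ [_ [a [b ->]] <-]; rewrite setTI; apply: sub_sigma_algebra.
by apply: (proj1 (continuousP _) f_cont); exact: interval_open.
Qed.

Lemma continuous_measurable_EFin (f : 'rV[R]_n -> R) : continuous f ->
  measurable_fun [set: borelX R n] (fun x : borelX R n => (f x)%:E).
Proof.
by move=> f_cont; apply/measurable_EFinP; exact: continuous_measurable_fun_rV.
Qed.

Lemma continuous_measurable_fun_rV_rV (g : 'rV[R]_n -> 'rV[R]_n) :
  continuous g -> measurable_fun [set: borelX R n] (g : borelX R n -> borelX R n).
Proof.
move=> g_cont.
apply: (@measurability _ _ _ _ _ (g : borelX R n -> borelX R n) (@open 'rV[R]_n)) => //.
move=> _ [B B_open <-]; rewrite setTI; apply: sub_sigma_algebra.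
exact: (proj1 (continuousP _) g_cont).
Qed.

Lemma open_gt0 (f : 'rV[R]_n -> R) : continuous f -> open [set x | 0 < f x].
Proof.
by move=> f_cont; exact: (proj1 (continuousP f) f_cont _ (@open_gt R 0)).
Qed.

Lemma supp_integral_eq0 (mu : {measure set (borelX R n) -> \bar R})
    (f g : 'rV[R]_n -> R) :
  continuous f -> measurable_fun [set: borelX R n] (g : borelX R n -> R) ->
  (forall x, 0 <= g x) -> (\int[mu]_x (g x)%:E = 0)%E ->
  (forall x, 0 < f x -> 0 < g x) ->
  forall u, supp mu u -> f u <= 0.
Proof.
move=> f_cont g_meas g_ge0 g_int0 fg u supp_u; rewrite leNgt; apply/negP => fu_gt0.
have := supp_u _ (open_gt0 f_cont) fu_gt0; rewrite lt0e => /andP[/eqP + _]; apply.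
have [N [N_meas muN0 gN]] : ae_eq mu setT (EFin \o g) (cst 0%E).
  apply/(ae_eq_integral_abs mu measurableT); first exact/measurable_EFinP.
  by rewrite -g_int0; apply: eq_integral => x _; rewrite gee0_abs ?lee_fin.
apply/eqP; rewrite eq_le measure_ge0 andbT -muN0 le_measure ?inE //.
  by apply: sub_sigma_algebra; exact: open_gt0.
by move=> x /fg gx_gt0; apply: gN => /(_ I) /= -[gx0]; rewrite gx0 ltxx in gx_gt0.
Qed.

Lemma integral_pushforward_eq (P Q : {measure set (borelX R n) -> \bar R})
    (T : 'rV[R]_n -> 'rV[R]_n) :
  measurable_fun [set: borelX R n] (T : borelX R n -> borelX R n) ->
  (forall A, measurable A -> pushforward Q (T : borelX R n -> borelX R n) A = P A) ->
  forall h : 'rV[R]_n -> \bar R,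
  measurable_fun [set: borelX R n] (h : borelX R n -> _) ->
  (forall x, 0 <= h x)%E ->
  (\int[P]_x h x = \int[Q]_x h (T x))%E.
Proof.
move=> T_meas QT_P h h_meas h_ge0.
rewrite (eq_measure_integral (pushforward Q (T : borelX R n -> borelX R n))).
  by rewrite ge0_integral_pushforward.
by move=> A A_meas _; rewrite -QT_P.
Qed.

End Borel.

Lemma ge0_small_quadratic (R : realFieldType) (a b : R) : 0 <= b ->
  (forall t, 0 < t <= 1 -> 0 <= t * a + t ^+ 2 * b) -> 0 <= a.
Proof.
move=> b_ge0 quad_ge0; rewrite leNgt; apply/negP => a_lt0.
have ba_gt0 : 0 < b - a by lra.
pose t := - a / (b - a).
have t_gt0 : 0 < t by rewrite divr_gt0 // oppr_gt0.
have tba : t * (b - a) = - a by rewrite mulfVK // gt_eqF.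
have /quad_ge0 : 0 < t <= 1 by rewrite t_gt0 ler_pdivrMr // mul1r; lra.
have -> : t * a + t ^+ 2 * b = t ^+ 2 * a.
  by rewrite expr2 -mulrA -[t * b](subrK (t * a)) -mulrBr tba; ring.
by rewrite pmulr_rge0 ?exprn_gt0 // leNgt a_lt0.
Qed.

Section Projection.
Variables (R : realType) (n : nat) (M : set 'rV[R]_n).
Hypotheses (M0 : M !=set0) (M_compact : compact M).

Lemma projM_spec u :
  M (projM M u) /\ forall w, M w -> enorm (projM M u - u) <= enorm (w - u).
Proof.
apply: (@xgetPex _ 0 [set v | M v /\ forall w, M w -> enorm (v - u) <= enorm (w - u)]).
have dist_cont : continuous (fun w : 'rV[R]_n => enorm (w - u)).
  apply: enorm_lipschitz_continuous => x y.
  by have := ler_dist_enorm (x - u) (y - u); rewrite opprB addrA subrK.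
have [v Mv v_min] := EVT_min_rV M0 M_compact (continuous_subspaceT dist_cont).
by exists v; split=> [|w Mw]; [move: Mv; rewrite inE | apply: v_min; rewrite inE].
Qed.

Lemma projM_in u : M (projM M u).
Proof. exact: (projM_spec u).1. Qed.

Lemma distM_projM u : distM M u = enorm (projM M u - u).
Proof.
have [Mpu pu_min] := projM_spec u.
apply/eqP; rewrite eq_le; apply/andP; split.
  apply: ge_inf; last by exists (projM M u).
  by exists 0 => _ [v Mv <-]; exact: enorm_ge0.
apply: lb_le_inf; first by exists (enorm (projM M u - u)), (projM M u).
by move=> _ [v Mv <-]; exact: pu_min.
Qed.

Lemma distM_le u w : M w -> distM M u <= enorm (w - u).
Proof. by rewrite distM_projM; exact: (projM_spec u).2. Qed.

Lemma distM_ge0 u : 0 <= distM M u.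
Proof. by rewrite distM_projM enorm_ge0. Qed.

Lemma distM_eq0 u : M u -> distM M u = 0.
Proof.
move=> Mu; apply/eqP; rewrite eq_le distM_ge0 andbT.
by rewrite -(enorm0 R n) -(subrr u) distM_le.
Qed.

Lemma Gamma_distM : Gamma (distM M).
Proof.
split=> [|x y]; first exact: distM_ge0.
have := distM_le x (projM_in y); have := distM_le y (projM_in x).
have := enormD (projM M y - y) (y - x); have := enormD (projM M x - x) (x - y).
rewrite !subrKA -!distM_projM (enorm_distC y x) ler_norml; lra.
Qed.

Lemma Gamma_le_projM (f : 'rV[R]_n -> R) u :
  Gamma f -> f u <= f (projM M u) + distM M u.
Proof.
move=> [_ f_lip]; rewrite distM_projM enorm_distC.
by have := f_lip u (projM M u); rewrite ler_norml; lra.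
Qed.

Hypothesis M_convex : convex_set (M : set (convex_lmodType 'rV[R]_n)).

Lemma projM_obtuse u w : M w -> dot (u - projM M u) (w - projM M u) <= 0.
Proof.
move=> Mw; set v := projM M u.
rewrite -opprB dotNl oppr_le0 -(pmulr_rge0 _ (ltr0n R 2)).
apply: (ge0_small_quadratic (b := dot (w - v) (w - v))).
  by rewrite -enorm_sqr sqr_ge0.
move=> t /andP[t_gt0 t_le1].
(* compare the distances from u to v and to the point v + t (w - v) of M *)
have Mz : M (t *: w + (1 - t) *: v).
  have := @M_convex w v (Itv01 (ltW t_gt0) t_le1); rewrite !inE.
  by apply => //; exact: projM_in.
have := (projM_spec u).2 _ Mz; rewrite -/v.
have -> : t *: w + (1 - t) *: v - u = (v - u) + t *: (w - v).
  by apply/rowP => i; rewrite !mxE; ring.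
rewrite -ler_sqr ?nnegrE ?enorm_ge0 // !enorm_sqr.
move: (v - u) (w - v) => a b.
rewrite dotDl !dotDr !dotZl !dotZr (dotC b a); lra.
Qed.

Lemma projM_nonexpansive x y : enorm (projM M x - projM M y) <= enorm (x - y).
Proof.
have := projM_obtuse x (projM_in y); have := projM_obtuse y (projM_in x).
move: (projM M x) (projM M y) => px py obtuse_y obtuse_x.
have dot_le : dot (px - py) (px - py) <= dot (x - y) (px - py).
  have -> : x - y = (px - py) + (x - px) - (y - py).
    by apply/rowP => i; rewrite !mxE; ring.
  have dot_x : dot (x - px) (px - py) = - dot (x - px) (py - px).
    by rewrite -[py - px]opprB dotNr opprK.
  rewrite [dot (_ + _ - _) _]dotBl [dot (_ + (_ - _)) _]dotDl; lra.
have := dot_le_enorm (x - y) (px - py); rewrite -enorm_sqr in dot_le.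
have := enorm_ge0 (x - y); have := enorm_ge0 (px - py); nra.
Qed.

Lemma continuous_projM : continuous (projM M).
Proof.
apply: enorm_lipschitz_continuous => x y.
exact: le_trans (mx_norm_le_enorm _) (projM_nonexpansive x y).
Qed.

End Projection.

Lemma lee_subDA_fin (R : realType) (A B D F : \bar R) :
  B \is a fin_num -> (F <= B + D)%E -> (A - D <= B + A - F)%E.
Proof.
by case: B => // b _; case: A => [a||]; case: D => [d||]; case: F => [f||] //=;
  rewrite ?lee_fin ?leey ?leNye //=; lra.
Qed.

Section DistanceMinimizer.
Variables (R : realType) (n : nat) (P Q : probability (borelX R n) R).
Local Notation M := (supp P).
Hypotheses (M_convex : convex_set (M : set (convex_lmodType 'rV[R]_n)))
  (M_compact : compact M)
  (Q_push : forall A : set (borelX R n), measurable A ->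
     pushforward Q (projM M : borelX R n -> borelX R n) A = P A).
Variables (tau p : R).
Hypotheses (tau_ge0 : 0 <= tau) (p_ge1 : 1 <= p).

Local Notation d := (distM M).
Local Notation penalty f := (fun x => tau * f x `^ p).

(* If M were empty, projM M would be the junk value 0 everywhere, and then P
   would charge every neighbourhood of 0. *)
Lemma supp_neq0 : M !=set0.
Proof.
have [//|M_empty] := pselect (M !=set0).
have proj0 u : projM M u = 0.
  by apply: xgetPN => v [Mv _]; apply: M_empty; exists v.
exists 0 => U U_open U0.
rewrite -Q_push; last exact: sub_sigma_algebra.
rewrite /pushforward (_ : _ @^-1` U = setT) ?probability_setT ?lte01 //.
by apply/seteqP; split => // x _ /=; rewrite proj0.
Qed.

Let M0 := supp_neq0.
Let projM_cont := continuous_projM M0 M_compact M_convex.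
Let distM_Gamma := Gamma_distM M0 M_compact.
Let distM_cont := Gamma_continuous distM_Gamma.

Lemma continuous_comp_projM (f : 'rV[R]_n -> R) :
  continuous f -> continuous (fun x => f (projM M x)).
Proof.
by move=> f_cont x; apply: continuous_comp; [exact: projM_cont | exact: f_cont].
Qed.

Lemma integral_projM (h : 'rV[R]_n -> \bar R) :
  measurable_fun [set: borelX R n] (h : borelX R n -> _) -> (forall x, 0 <= h x)%E ->
  (\int[P]_x h x = \int[Q]_x h (projM M x))%E.
Proof.
apply: (integral_pushforward_eq _ Q_push).
exact: continuous_measurable_fun_rV_rV projM_cont.
Qed.

Lemma measurable_penalty (f : 'rV[R]_n -> R) : continuous f ->
  measurable_fun [set: borelX R n] (penalty f : borelX R n -> R).
Proof.
move=> f_cont; apply: measurable_funM; first exact: measurable_cst.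
exact: measurableT_comp (measurable_powR p) (continuous_measurable_fun_rV f_cont).
Qed.

Lemma objective_split (f : 'rV[R]_n -> R) : Gamma f ->
  objective P Q tau p f =
  (\int[P]_x (f x)%:E + \int[P]_x (penalty f x)%:E - \int[Q]_x (f x)%:E)%E.
Proof.
move=> Gf; have f_cont := Gamma_continuous Gf; rewrite /objective; congr (_ - _)%E.
under eq_integral do rewrite EFinD.
apply: ge0_integralD => //.
- by move=> x _; rewrite lee_fin Gf.1.
- exact: continuous_measurable_EFin.
- by move=> x _; rewrite lee_fin mulr_ge0 ?powR_ge0.
- by apply/measurable_EFinP; exact: measurable_penalty f_cont.
Qed.

Lemma integral_Gamma_fin_num (f : 'rV[R]_n -> R) : Gamma f ->
  (\int[P]_x (f x)%:E)%E \is a fin_num.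
Proof.
move=> Gf; have f_cont := Gamma_continuous Gf.
have [c _ c_max] := EVT_max_rV M0 M_compact (continuous_subspaceT f_cont).
rewrite ge0_fin_numE; last by apply: integral_ge0 => x _; rewrite lee_fin Gf.1.
rewrite integral_projM; last 2 first.
- exact: continuous_measurable_EFin.
- by move=> x; rewrite lee_fin Gf.1.
apply: (@le_lt_trans _ _ (\int[Q]_x (f c)%:E)%E).
  apply: ge0_le_integral => //.
  - by move=> x _; rewrite lee_fin Gf.1.
  - by apply: continuous_measurable_EFin; exact: continuous_comp_projM.
  - by move=> x _; rewrite lee_fin c_max // inE; exact: projM_in M0 M_compact _.
exact/probability_integral_cst_lty/Gf.1.
Qed.

Lemma objective_lower_bound (f : 'rV[R]_n -> R) : Gamma f ->
  (\int[P]_x (penalty f x)%:E - \int[Q]_x (d x)%:E <= objective P Q tau p f)%E.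
Proof.
move=> Gf; have f_cont := Gamma_continuous Gf.
rewrite objective_split //; apply: lee_subDA_fin; first exact: integral_Gamma_fin_num.
rewrite integral_projM; last 2 first.
- exact: continuous_measurable_EFin.
- by move=> x; rewrite lee_fin Gf.1.
rewrite -ge0_integralD //; last 4 first.
- by move=> x _; rewrite lee_fin Gf.1.
- by apply: continuous_measurable_EFin; exact: continuous_comp_projM.
- by move=> x _; rewrite lee_fin distM_ge0.
- exact: continuous_measurable_EFin.
apply: ge0_le_integral => //.
- by move=> x _; rewrite lee_fin Gf.1.
- exact: continuous_measurable_EFin.
- by apply: emeasurable_funD; apply: continuous_measurable_EFin;
    [exact: continuous_comp_projM | exact: distM_cont].
- by move=> x _; rewrite -EFinD lee_fin; exact: Gamma_le_projM.
Qed.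

Lemma objective_vanishing_on_supp (g : 'rV[R]_n -> R) :
  continuous g -> (forall x, 0 <= g x) -> (forall u, M u -> g u = 0) ->
  objective P Q tau p g = (- \int[Q]_x (g x)%:E)%E.
Proof.
move=> g_cont g_ge0 g_M; rewrite /objective integral_projM; last 2 first.
- apply/measurable_EFinP; apply: measurable_funD.
    exact: continuous_measurable_fun_rV g_cont.
  exact: measurable_penalty g_cont.
- by move=> x; rewrite lee_fin addr_ge0 ?mulr_ge0 ?powR_ge0.
rewrite integral0_eq ?sub0e // => x _; rewrite g_M; last exact: projM_in M0 M_compact _.
by rewrite powR0 ?mulr0 ?addr0 // gt_eqF // (lt_le_trans ltr01 p_ge1).
Qed.

Lemma objective_distM : objective P Q tau p d = (- \int[Q]_x (d x)%:E)%E.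
Proof.
apply: objective_vanishing_on_supp; first exact: distM_cont.
  exact: distM_ge0 M0 M_compact.
exact: distM_eq0 M0 M_compact.
Qed.

Lemma distM_minimizes (f : 'rV[R]_n -> R) : Gamma f ->
  (objective P Q tau p d <= objective P Q tau p f)%E.
Proof.
move=> Gf; rewrite objective_distM -sub0e; apply: le_trans (objective_lower_bound Gf).
by apply: leeB => //; apply: integral_ge0 => x _; rewrite lee_fin mulr_ge0 ?powR_ge0.
Qed.

Hypotheses (tau_gt0 : 0 < tau) (Q_moment : (\int[Q]_x (enorm x)%:E < +oo)%E).

Lemma integral_distM_fin_num : (\int[Q]_x (d x)%:E)%E \is a fin_num.
Proof.
have [m Mm] := M0.
rewrite ge0_fin_numE; last by apply: integral_ge0 => x _; rewrite lee_fin distM_ge0.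
apply: (@le_lt_trans _ _ (\int[Q]_x ((enorm x)%:E + (enorm m)%:E))%E).
  apply: ge0_le_integral => //.
  - by move=> x _; rewrite lee_fin distM_ge0.
  - exact: continuous_measurable_EFin.
  - apply: emeasurable_funD; last exact: measurable_cst.
    by apply: continuous_measurable_EFin; exact: continuous_enorm.
  - move=> x _; rewrite -EFinD lee_fin (le_trans (distM_le M0 M_compact x Mm)) //.
    by rewrite addrC -(enormN x) enormD.
rewrite ge0_integralD //.
- by rewrite lte_add_pinfty // probability_integral_cst_lty // enorm_ge0.
- by move=> x _; rewrite lee_fin enorm_ge0.
- by apply: continuous_measurable_EFin; exact: continuous_enorm.
- by move=> x _; rewrite lee_fin enorm_ge0.
Qed.

Variable fstar : 'rV[R]_n -> R.
Hypotheses (fstar_Gamma : Gamma fstar)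
  (fstar_min : forall f, Gamma f ->
     (objective P Q tau p fstar <= objective P Q tau p f)%E).

Let fstar_cont := Gamma_continuous fstar_Gamma.

Lemma minimizer_penalty_eq0 : (\int[P]_x (penalty fstar x)%:E = 0)%E.
Proof.
have := le_trans (objective_lower_bound fstar_Gamma) (fstar_min distM_Gamma).
have D_fin := integral_distM_fin_num.
rewrite objective_distM leeBlDr // addrC subee //.
move=> pen_le0; apply/eqP; rewrite eq_le pen_le0 /=.
by apply: integral_ge0 => x _; rewrite lee_fin mulr_ge0 ?powR_ge0.
Qed.

Lemma minimizer_eq0_on_supp u : M u -> fstar u = 0.
Proof.
move=> Mu; apply/eqP; rewrite eq_le fstar_Gamma.1 andbT.
apply: (supp_integral_eq0 fstar_cont (measurable_penalty fstar_cont) _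
  minimizer_penalty_eq0) Mu.
- by move=> x; rewrite mulr_ge0 ?powR_ge0.
- by move=> x fx_gt0; rewrite mulr_gt0 ?powR_gt0.
Qed.

Lemma minimizer_le_distM u : fstar u <= d u.
Proof.
have := Gamma_le_projM M0 M_compact u fstar_Gamma.
by rewrite (minimizer_eq0_on_supp (projM_in M0 M_compact u)) add0r.
Qed.

Lemma minimizer_integral_eq_distM : (\int[Q]_x (fstar x)%:E = \int[Q]_x (d x)%:E)%E.
Proof.
apply/eqP; rewrite eq_le; apply/andP; split.
  apply: ge0_le_integral => //.
  - by move=> x _; rewrite lee_fin fstar_Gamma.1.
  - exact: continuous_measurable_EFin.
  - exact: continuous_measurable_EFin.
  - by move=> x _; rewrite lee_fin minimizer_le_distM.
have := fstar_min distM_Gamma.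
rewrite objective_distM.
rewrite (objective_vanishing_on_supp fstar_cont fstar_Gamma.1) ?leeN2 //.
exact: minimizer_eq0_on_supp.
Qed.

Let gap_cont : continuous (fun x => d x - fstar x).
Proof. by move=> x; apply: continuousB; [exact: distM_cont | exact: fstar_cont]. Qed.

Lemma minimizer_gap_integral_eq0 : (\int[Q]_x (d x - fstar x)%:E = 0)%E.
Proof.
have D_fin := integral_distM_fin_num.
have : (\int[Q]_x (d x)%:E = \int[Q]_x (d x)%:E + \int[Q]_x (d x - fstar x)%:E)%E.
  rewrite -{2}minimizer_integral_eq_distM -ge0_integralD //.
  - by apply: eq_integral => x _; rewrite -EFinD subrKC.
  - by move=> x _; rewrite lee_fin fstar_Gamma.1.
  - exact: continuous_measurable_EFin.
  - by move=> x _; rewrite lee_fin subr_ge0 minimizer_le_distM.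
  - exact: continuous_measurable_EFin gap_cont.
move/(congr1 (fun e => e - \int[Q]_x (d x)%:E)%E).
by rewrite subee // [X in (X - _)%E]addrC addeK.
Qed.

Lemma minimizer_eq_distM u : supp Q u -> fstar u = d u.
Proof.
move=> Qu; apply/eqP; rewrite eq_le minimizer_le_distM /= -subr_le0.
apply: (supp_integral_eq0 gap_cont _ _ minimizer_gap_integral_eq0) Qu => //.
- exact: continuous_measurable_fun_rV gap_cont.
- by move=> x; rewrite subr_ge0 minimizer_le_distM.
Qed.

End DistanceMinimizer.

Theorem theorem3p1 (R : realType) (n : nat)
  (Ptrue : probability (borelX R n) R)
  (Pk : nat -> probability (borelX R n) R) :
  convex_set (supp Ptrue : set (convex_lmodType 'rV[R]_n)) ->
  compact (supp Ptrue) ->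
  (forall k (A : set (borelX R n)), measurable A ->
     pushforward (Pk k) (projM (supp Ptrue) : borelX R n -> borelX R n) A = Ptrue A) ->
  forall (k : nat) (tau p : R), 0 <= tau -> 1 <= p ->
    (Gamma (distM (supp Ptrue)) /\
     (forall f, Gamma f ->
        (objective Ptrue (Pk k) tau p (distM (supp Ptrue))
         <= objective Ptrue (Pk k) tau p f)%E)) /\
    (0 < tau ->
     (\int[Pk k]_x (enorm x)%:E < +oo)%E ->
     forall fstar, Gamma fstar ->
       (forall f, Gamma f ->
          (objective Ptrue (Pk k) tau p fstar <= objective Ptrue (Pk k) tau p f)%E) ->
       forall u, supp (Pk k) u -> fstar u = distM (supp Ptrue) u).
Proof.
move=> M_convex M_compact push k tau p tau_ge0 p_ge1.
have M0 := supp_neq0 (push k).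
split; first split.
- exact: Gamma_distM M0 M_compact.
- by move=> f /(distM_minimizes M_convex M_compact (push k) tau_ge0 p_ge1).
- move=> tau_gt0 moment fstar fstar_Gamma fstar_min u.
  exact: (minimizer_eq_distM M_convex M_compact (push k) tau_ge0 p_ge1 tau_gt0 moment
    fstar_Gamma fstar_min).
Qed.
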